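(* Let $p\geq 2$ be a prime. For $j\in\{2,4,8\}$ consider the substitutions (j=2): $f=\frac{1}{x_2}$, $g=x_2(-\alpha_2+x_2y_2)$; (j=4): $f=x_4(\alpha_1+x_4y_4)$, $g=\frac{1}{x_4}$; (j=8): $f=\frac{1}{x_8}$, $g=\frac{1}{x_8(1-tx_8+(t^2+1-\alpha_1-\alpha_2)x_8^2+y_8x_8^3)}$. Then for each $j$, after the substitution, $$\mathcal{I}_p=P_j(y_j)+x_jR_j(x_j,y_j),$$ where $P_j\in\mathbb{F}_p[y_j,\alpha_1,\alpha_2,t]$ is a polynomial and $R_j\in\mathbb{F}_p(x_j,y_j,\alpha_1,\alpha_2,t)$ is a rational function whose reduced denominator is not divisible by $x_j$. In particular, for any field $\mathbf{k}$ of characteristic $p$ and any choice of parameters $t,\alpha_1,\alpha_2\in\mathbf{k}$, $\mathcal{I}_p$ defines a regular map $\mathcal{I}_p:\mathcal{X}\to\mathbb{A}^1_{\mathbf{k}}$ on the initial value space $\mathcal{X}$.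
   Context: Define the $2\times2$ matrix polynomial in $z$ $$A(z)=\begin{bmatrix}w&0\\0&1\end{bmatrix}\begin{bmatrix}1&0\\ f-tfg-tz&1\end{bmatrix}\begin{bmatrix}g&1\\ z+\alpha_2&0\end{bmatrix}\begin{bmatrix}-f&1\\ z&0\end{bmatrix}\begin{bmatrix}tz-g+tfg&1\\ z-\alpha_1&0\end{bmatrix}\begin{bmatrix}w^{-1}&0\\0&1\end{bmatrix}$$ and $\mathcal{I}_p:=\operatorname{Tr}[A(p-1)\cdots A(1)A(0)]$ computed in characteristic $p$, an element of $\mathbb{F}_p[f,g,\alpha_1,\alpha_2,t]$ independent of $w$. Initial value space: fix a field $\mathbf{k}$ and $t,\alpha_1,\alpha_2\in\mathbf{k}$. Start from $\mathbb{P}^1_{\mathbf{k}}\times\mathbb{P}^1_{\mathbf{k}}$ with coordinates $(f,g)$, covered by charts $(f,g),(F,g),(f,G),(F,G)$ with $F=1/f$, $G=1/g$. Convention: blowing up a point $b_i:(x,y)=(x_*,y_* )$ in a chart $(x,y)$ gives exceptional line $E_i$ covered by charts $(u_i,v_i)$ with $x=x_*+u_iv_i,\ y=y_*+v_i$ and $(U_i,V_i)$ with $x=x_*+U_i,\ y=y_*+U_iV_i$. Blow up successively the eight points $b_1:(F,g)=(0,0)$; $b_2:(U_1,V_1)=(0,-\alpha_2)$; $b_3:(f,G)=(0,0)$; $b_4:(u_3,v_3)=(\alpha_1,0)$; $b_5:(F,G)=(0,0)$; $b_6:(U_5,V_5)=(0,1)$; $b_7:(U_6,V_6)=(0,-t)$;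 $b_8:(U_7,V_7)=(0,t^2+\alpha_1+\alpha_2-1)$, obtaining a surface $\widehat{\mathcal{X}}$. Let $D\subseteq\widehat{\mathcal{X}}$ be the strict transform (under the blow-ups of $b_2,b_4,b_8$) of the total transform of the curve $\{f=\infty\}\cup\{g=\infty\}$ under the other blow-ups. The initial value space is $\mathcal{X}:=\widehat{\mathcal{X}}\setminus D$. The parts of $E_2,E_4,E_8$ away from $D$ are covered by the coordinates $(x_2,y_2)=(U_2,V_2)$, $(x_4,y_4)=(v_4,u_4)$, $(x_8,y_8)=(U_8,V_8)$ given by the substitutions in the claim, where $E_j$ has local equation $x_j=0$. *)

From HB Require Import structures.
From mathcomp Require Import all_boot all_order all_algebra.
From mathcomp Require Import fraction.
From mathcomp Require Import mpoly.

Set Implicit Arguments.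
Unset Strict Implicit.
Unset Printing Implicit Defensive.

Import GRing.Theory.
Local Open Scope ring_scope.

(* The 2x2 matrix A(z) of the paper, with entries in a field K
   (w is the conjugating parameter, assumed nonzero in the theorem). *)
Definition Amat (K : fieldType) (w f g a1 a2 t z : K) : 'M[K]_2 :=
  let D  : 'M[K]_2 := \matrix_(i, j) (if i == j then (if i == 0 then w else 1) else 0) in
  let Di : 'M[K]_2 := \matrix_(i, j) (if i == j then (if i == 0 then w^-1 else 1) else 0) in
  let L  : 'M[K]_2 := \matrix_(i, j)
           (if (i == 1) && (j == 0) then f - t * f * g - t * z
            else if i == j then 1 else 0) in
  let M1 : 'M[K]_2 := \matrix_(i, j)
           (if i == 0 then (if j == 0 then g else 1)
            else (if j == 0 then z + a2 else 0)) in
  let M2 : 'M[K]_2 := \matrix_(i, j)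
           (if i == 0 then (if j == 0 then - f else 1)
            else (if j == 0 then z else 0)) in
  let M3 : 'M[K]_2 := \matrix_(i, j)
           (if i == 0 then (if j == 0 then t * z - g + t * f * g else 1)
            else (if j == 0 then z - a1 else 0)) in
  D * L * M1 * M2 * M3 * Di.

(* I_p evaluated at (f,g,alpha_1,alpha_2,t) in a field K (of characteristic p
   in all uses below): Tr [A(p-1) ... A(1) A(0)], with z ranging over k%:R. *)
Definition Ip (K : fieldType) (p : nat) (w f g a1 a2 t : K) : K :=
  \tr (\prod_(i < p) Amat w f g a1 a2 t ((p.-1 - i)%N%:R)).

Inductive exc_line := E2 | E4 | E8.

Definition chart_subst (K : fieldType) (j : exc_line) (x y a1 a2 t : K) : K * K :=
  match j with
  | E2 => (x^-1, x * (- a2 + x * y))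
  | E4 => (x * (a1 + x * y), x^-1)
  | E8 => (x^-1,
           (x * (1 - t * x + (t ^+ 2 + 1 - a1 - a2) * x ^+ 2 + y * x ^+ 3))^-1)
  end.

Notation "x %:F" := (@FracField.tofrac _ x) : ring_scope.

Notation ratfun F n := {fraction {mpoly F[n]}}.

Definition has_chart_decomp (F : fieldType) (n : nat) (ix : 'I_n)
    (v : ratfun F n) : Prop :=
  exists (P N D : {mpoly F[n]}),
    (forall m, m \in msupp P -> m ix = 0%N) /\
    ~ (exists Q : {mpoly F[n]}, D = 'X_ix * Q) /\
    v = P%:F + ('X_ix)%:F * (N%:F / D%:F).

(* Conjugating away diag(w, 1), I_p is the trace of the product over z in F_p
   of the 2x2 matrices L(z) G(z) F(z) E(z), whose entries are rational in f, g.
   In the charts of E_2 and E_4 each such factor has polynomial entries, since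
   the pole of f (resp. g) along x = 0 cancels.  In the chart of E_8 both f and
   g have poles; they cancel once the cyclic product is regrouped into factors
   F(z) E(z) L(z-1) G(z-1), which is allowed because z - 1 runs through F_p
   with z.  The entries then lie in F[x, y, ...][1/h] with h = 1 + x k, and any
   such element is P + x N / h^m with P free of x. *)

From mathcomp Require Import all_boot all_order all_algebra.
From mathcomp Require Import fraction.
From mathcomp Require Import mpoly.
From mathcomp Require Import ring zify.

Set Implicit Arguments.
Unset Strict Implicit.
Unset Printing Implicit Defensive.

Import GRing.Theory.
Local Open Scope ring_scope.

Section Localization.
Variables (R : idomainType) (h : R).
Hypothesis h_neq0 : h != 0.

Definition localized (v : {fraction R}) :=
  exists (a : R) (m : nat), v = a%:F / h%:F ^+ m.

Let hF_neq0 : h%:F != 0. Proof. by rewrite tofrac_eq0. Qed.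

Lemma localized_tofrac a : localized a%:F.
Proof. by exists a, 0%N; rewrite expr0 divr1. Qed.

Lemma localized_nat k : localized k%:R.
Proof. by rewrite -(rmorph_nat (@FracField.tofrac R)); apply: localized_tofrac. Qed.

Lemma localized0 : localized 0.
Proof. exact: (localized_nat 0). Qed.

Lemma localized1 : localized 1.
Proof. exact: (localized_nat 1). Qed.

Lemma localizedV : localized (h%:F)^-1.
Proof. by exists 1, 1%N; rewrite rmorph1 expr1 div1r. Qed.

Lemma localizedD u v : localized u -> localized v -> localized (u + v).
Proof.
move=> [a [m ->]] [b [k ->]]; exists (a * h ^+ k + b * h ^+ m), (m + k)%N.
by rewrite addf_div ?expf_neq0 // rmorphD !rmorphM !rmorphXn exprD mulrC.
Qed.

Lemma localizedN u : localized u -> localized (- u).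
Proof. by move=> [a [m ->]]; exists (- a), m; rewrite rmorphN mulNr. Qed.

Lemma localizedM u v : localized u -> localized v -> localized (u * v).
Proof.
move=> [a [m ->]] [b [k ->]]; exists (a * b), (m + k)%N.
by rewrite mulf_div rmorphM exprD.
Qed.

Lemma localizedX u k : localized u -> localized (u ^+ k).
Proof.
move=> lu; elim: k => [|k IH]; first by rewrite expr0; apply: localized1.
by rewrite exprS; apply: localizedM.
Qed.

Definition mx_localized m n (A : 'M[{fraction R}]_(m, n)) :=
  forall i j, localized (A i j).

Lemma localized_sum m (F : 'I_m -> {fraction R}) :
  (forall i, localized (F i)) -> localized (\sum_(i < m) F i).
Proof. by move=> lF; apply: (big_ind localized localized0 localizedD). Qed.

Lemma mx_localizedM m n k (A : 'M_(m, n)) (B : 'M_(n, k)) :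
  mx_localized A -> mx_localized B -> mx_localized (A *m B).
Proof.
by move=> lA lB i j; rewrite mxE; apply: localized_sum => l; apply: localizedM.
Qed.

Lemma mx_localized1 n : mx_localized (1%:M : 'M_n).
Proof.
by move=> i j; rewrite mxE; case: (i == j); [apply: localized1 | apply: localized0].
Qed.

Lemma localized_trace_prod n m (A : 'I_m -> 'M_n.+1) :
  (forall i, mx_localized (A i)) -> localized (\tr (\prod_(i < m) A i)).
Proof.
move=> lA; have lP : mx_localized (\prod_(i < m) A i).
  apply: (big_ind (@mx_localized _ _) (@mx_localized1 _)) => // B C lB lC.
  by rewrite -mulmxE; apply: mx_localizedM.
by apply: localized_sum => i; apply: lP.
Qed.

End Localization.

Lemma divf_decomp (K : fieldType) (a b c d : K) : 1 + c * d != 0 ->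
  (a + c * b) / (1 + c * d) = a + c * ((b - a * d) / (1 + c * d)).
Proof. by move=> nz; field. Qed.

Section ChartDecomposition.
Variables (F : fieldType) (n : nat) (ix : 'I_n).

Lemma mpoly_splitX (a : {mpoly F[n]}) :
  exists P Q : {mpoly F[n]},
    (forall m, m \in msupp P -> m ix = 0%N) /\ a = P + 'X_ix * Q.
Proof.
elim/mpolyind: a => [|c m a _ _ [P [Q [PX ->]]]].
  by exists 0, 0; rewrite msupp0 mulr0 addr0.
have [m_ix0|m_ix_gt0] := eqVneq (m ix) 0%N.
  exists (c *: 'X_[m] + P), Q; split; last by rewrite addrA.
  move=> m' /msuppD_le; rewrite mem_cat => /orP [/msuppZ_le|/PX //].
  by rewrite msuppX inE => /eqP ->.
have Um : (U_(ix) <= m)%MM.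
  by apply/mnm_lepP => j; rewrite mnm1E; case: eqP => [<-|_] //=; rewrite lt0n.
exists P, (c *: 'X_[m - U_(ix)] + Q); split => //.
by rewrite -{1}(submK Um) mpolyXD mulrDr -scalerAr mulrC addrCA.
Qed.

Variable H : {mpoly F[n]}.
Let h := 1 + 'X_ix * H.

Let meval0_hX m : meval (fun=> 0) (h ^+ m) = 1.
Proof. by rewrite rmorphXn /= mevalD mevalM mevalXU meval1 mul0r addr0 expr1n. Qed.

Lemma oneDXM_neq0 : h != 0.
Proof.
by apply: contra_eq_neq (meval0_hX 1) => ->; rewrite meval0 eq_sym oner_neq0.
Qed.

Lemma localized_chart_decomp v : localized h v -> has_chart_decomp ix v.
Proof.
move=> [a [m ->]]; have [P [Q [PX ->]]] := mpoly_splitX a.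
have [E hmE] : exists E, h ^+ m = 1 + 'X_ix * E.
  exists (H * \sum_(i < m) h ^+ i).
  by apply/eqP; rewrite addrC -subr_eq subrX1 /h addrAC subrr add0r mulrA.
exists P, (Q - P * E), (h ^+ m); split => //; split.
  move=> [D hmXD]; have := meval0_hX m.
  by rewrite hmXD mevalM mevalXU mul0r => /eqP; rewrite eq_sym oner_eq0.
have : (h ^+ m)%:F != 0 by rewrite tofrac_eq0 expf_neq0 // oneDXM_neq0.
rewrite -rmorphXn hmE !(rmorphD, rmorphN, rmorphM, rmorph1) /=.
exact: divf_decomp.
Qed.

End ChartDecomposition.

Section TraceOfProducts.
Variables (R : comPzRingType) (n : nat).

Lemma mxtrace_prod_conj (D D' : 'M[R]_n.+1) m (A : 'I_m -> 'M_n.+1) :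
  D * D' = 1 -> D' * D = 1 ->
  \tr (\prod_(i < m) (D * A i * D')) = \tr (\prod_(i < m) A i).
Proof.
move=> DD' D'D; pose conj B := D * B * D'.
have conjM : {morph conj : B C / B * C}.
  by move=> B C; rewrite /conj !mulrA -[D * B * D' * D]mulrA D'D mulr1.
rewrite -(big_morph conj conjM (_ : conj 1 = 1)) /conj; last by rewrite mulr1.
by rewrite -mulrA -mulmxE mxtrace_mulC !mulmxE -mulrA D'D mulr1.
Qed.

Lemma mxtrace_prod_rot m (P Q : nat -> 'M[R]_n.+1) :
  \tr (\prod_(i < m.+1) (P i * Q i)) =
  \tr (\prod_(i < m.+1) (Q i * P (i.+1 %% m.+1)%N)).
Proof.
have shift k : \prod_(i < k.+1) (P i * Q i) =
               P 0%N * (\prod_(i < k) (Q i * P i.+1)) * Q k.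
  elim: k => [|k IH]; first by rewrite big_ord1 big_ord0 mulr1.
  by rewrite big_ord_recr /= IH big_ord_recr /= !mulrA.
rewrite shift -mulrA -mulmxE mxtrace_mulC !mulmxE -mulrA big_ord_recr /= modnn.
by under [in RHS]eq_bigr => i _ do rewrite modn_small ?ltnS //.
Qed.

End TraceOfProducts.

Lemma natr_rev_succ (R : nzRingType) p i : p \in [pchar R] -> (i < p)%N ->
  (p.-1 - i.+1 %% p)%N%:R = (p.-1 - i)%N%:R - 1 :> R.
Proof.
move=> pcharR; rewrite leq_eqVlt => /predU1P[ip | ilt].
  rewrite ip modnn subn0 -ip /= subnn sub0r; apply/eqP.
  by rewrite -addr_eq0 -mulrSr ip (pcharf0 pcharR).
have -> : (p.-1 - i = (p.-1 - i.+1).+1)%N by lia.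
by rewrite modn_small // mulrSr addrK.
Qed.

Definition mx2 (T : Type) (a b c d : T) : 'M[T]_2 :=
  \matrix_(i, j) if i == 0 then (if j == 0 then a else b)
                 else (if j == 0 then c else d).

Lemma ord2P (i : 'I_2) : i = 0 \/ i = 1.
Proof. by case: i => [[|[|//]] Hi]; [left|right]; apply/val_inj. Qed.

Lemma matrix_mx2 (T : Type) (E : 'I_2 -> 'I_2 -> T) :
  \matrix_(i, j) E i j = mx2 (E 0 0) (E 0 1) (E 1 0) (E 1 1).
Proof.
by apply/matrixP => i j; rewrite !mxE; case: (ord2P i) => ->; case: (ord2P j) => ->.
Qed.

Lemma mx2_mul (R : pzRingType) (a b c d a' b' c' d' : R) :
  mx2 a b c d * mx2 a' b' c' d' =
  mx2 (a * a' + b * c') (a * b' + b * d') (c * a' + d * c') (c * b' + d * d').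
Proof.
apply/matrixP => i j; rewrite -mulmxE !mxE !big_ord_recl big_ord0 !mxE addr0 /=.
by case: (ord2P i) => ->; case: (ord2P j) => ->.
Qed.

Lemma mx_localized_mx2 (R : idomainType) (h : R) (a b c d : {fraction R}) :
  localized h a -> localized h b -> localized h c -> localized h d ->
  mx_localized h (mx2 a b c d).
Proof.
by move=> la lb lc ld i j; rewrite mxE; case: (ord2P i) => ->; case: (ord2P j) => ->.
Qed.

Section LaxMatrix.
Variable K : fieldType.
Implicit Types (w f g t z : K).

Definition Lmx f g t z := mx2 1 0 (f - t * f * g - t * z) 1.
Definition Gmx g (a2 : K) z := mx2 g 1 (z + a2) 0.
Definition Fmx f z := mx2 (- f) 1 z 0.
Definition Emx f g (a1 : K) t z := mx2 (t * z - g + t * f * g) 1 (z - a1) 0.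

Definition Cmx f g (a1 a2 : K) t z :=
  Lmx f g t z * Gmx g a2 z * Fmx f z * Emx f g a1 t z.
Definition Bmx f g (a1 a2 : K) t z :=
  Fmx f z * Emx f g a1 t z * Lmx f g t (z - 1) * Gmx g a2 (z - 1).

Lemma Amat_conj w f g (a1 a2 : K) t z :
  Amat w f g a1 a2 t z = mx2 w 0 0 1 * Cmx f g a1 a2 t z * mx2 w^-1 0 0 1.
Proof. by rewrite /Amat /= !matrix_mx2 /= /Cmx !mulrA. Qed.

Lemma Ip_Cmx p w f g (a1 a2 : K) t : w != 0 ->
  Ip p w f g a1 a2 t = \tr (\prod_(i < p) Cmx f g a1 a2 t (p.-1 - i)%N%:R).
Proof.
move=> w_neq0; rewrite /Ip; under eq_bigr do rewrite Amat_conj.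
apply: mxtrace_prod_conj;
  rewrite mx2_mul ?mulfV ?mulVf // !(mulr0, mul0r, addr0, add0r, mulr1).
all: by apply/matrixP => i j; rewrite !mxE; case: (ord2P i) => ->; case: (ord2P j) => ->.
Qed.

(* In the chart of E_8 the poles of f and g cancel only between consecutive
   factors A(z_i) A(z_(i+1)), with z_(i+1) = z_i - 1 cyclically in F_p. *)
Lemma Ip_Bmx p w f g (a1 a2 : K) t : p \in [pchar K] -> w != 0 ->
  Ip p w f g a1 a2 t = \tr (\prod_(i < p) Bmx f g a1 a2 t (p.-1 - i)%N%:R).
Proof.
move=> pcharK w_neq0; rewrite Ip_Cmx //.
case: p pcharK => [|p] pcharK; first by have := pcharf_prime pcharK.
pose z (i : nat) : K := (p - i)%N%:R.
pose P i := Lmx f g t (z i) * Gmx g a2 (z i).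
pose Q i := Fmx f (z i) * Emx f g a1 t (z i).
rewrite (eq_bigr (fun i : 'I_p.+1 => P i * Q i)); last first.
  by move=> i _; rewrite /Cmx !mulrA.
rewrite mxtrace_prod_rot; congr (\tr _); apply: eq_bigr => i _.
by rewrite /Bmx /P /Q /z -[p in (p - _)%N]/(p.+1.-1) natr_rev_succ // !mulrA.
Qed.

End LaxMatrix.

Section Charts.
Variables (K : fieldType) (x y a1 a2 t z : K).
Hypothesis x_neq0 : x != 0.

Local Notation u := (x * y - a2).
Local Notation s := (a1 + x * y).

(* Here u = f g. *)
Lemma Cmx_E2 :
  Cmx (chart_subst E2 x y a1 a2 t).1 (chart_subst E2 x y a1 a2 t).2 a1 a2 t z =
  mx2 (z - u) (x * u) (t * (u ^+ 2 - z ^+ 2) - y) (x * y + z - t * x * u * (u + z))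
  * mx2 (t * (z + u) - x * u) 1 (z - a1) 0.
Proof. by rewrite /= /Cmx /Lmx /Gmx /Fmx /Emx !mx2_mul; congr mx2; field. Qed.

(* Here s = f g. *)
Lemma Cmx_E4 :
  Cmx (chart_subst E4 x y a1 a2 t).1 (chart_subst E4 x y a1 a2 t).2 a1 a2 t z =
  mx2 1 0 (x * s - t * (s + z)) 1
  * mx2 (t * (z ^+ 2 - s ^+ 2) + y) (z - s)
        ((z + a2) * (x * y + z - t * x * s * (z + s))) (- (z + a2) * x * s).
Proof. by rewrite /= /Cmx /Lmx /Gmx /Fmx /Emx !mx2_mul; congr mx2; field. Qed.

Local Notation b := (t ^+ 2 + 1 - a1 - a2).
Local Notation k := (x * (b + y * x) - t).
Local Notation m := (t * k + b + x * y).
Local Notation r := (1 + x * k)^-1.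

(* With r = 1 / (1 + x k): f = 1/x, g = r/x, f - g = k r and
   t + f - g = x m r, so no entry has a pole along x = 0. *)
Lemma Bmx_E8 : 1 + x * k != 0 ->
  Bmx (chart_subst E8 x y a1 a2 t).1 (chart_subst E8 x y a1 a2 t).2 a1 a2 t z =
  mx2 (r ^+ 2 * (k * (z - a1) - (z - 1 + a2) * k * (2 + x * k) - t * (b + y * x) - y))
      (z - a1 - m * r) (z * (m * r ^+ 2 + z - 1 + a2)) (z * (t + k * r)).
Proof.
rewrite /= /Bmx /Lmx /Gmx /Fmx /Emx !mx2_mul => q_neq0.
have -> : 1 - t * x + b * x ^+ 2 + y * x ^+ 3 = 1 + x * k by ring.
by congr mx2; rewrite !(mulr1, mulr0, mul1r, addr0, add0r); field;
  rewrite ?q_neq0 ?x_neq0.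
Qed.

End Charts.

Lemma pchar_mpoly_frac (F : fieldType) n p :
  p \in [pchar F] -> p \in [pchar {fraction {mpoly F[n]}}].
Proof. by rewrite (fmorph_pchar (@FracField.tofrac _ \o @mpolyC n F)). Qed.

Lemma tofrac_mpolyX_neq0 (F : fieldType) n (i : 'I_n) :
  ('X_i : {mpoly F[n]})%:F != 0.
Proof.
rewrite tofrac_eq0; apply: contra_neq (oner_neq0 F) => X0.
by rewrite -(mevalXU (fun=> 1) i) X0 meval0.
Qed.

Ltac localized_closure h_neq0 :=
  repeat first
    [ apply: (localizedD h_neq0) | apply: localizedN | apply: localizedM
    | apply: localizedX | apply: localized_nat | apply: localized0 | apply: localized1
    | apply: localized_tofrac | apply: localizedV ].

Section ChartRegularity.
Variables (F : fieldType) (n : nat) (ix : 'I_n) (Y A1 A2 T : {mpoly F[n]}).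
Variables (p : nat) (w : {fraction {mpoly F[n]}}).
Hypothesis w_neq0 : w != 0.

Local Notation x := (('X_ix : {mpoly F[n]})%:F).
Local Notation chart j :=
  (chart_subst j x Y%:F A1%:F A2%:F T%:F).
Local Notation Ip_chart j :=
  (Ip p w (chart j).1 (chart j).2 A1%:F A2%:F T%:F).

Let x_neq0 : x != 0. Proof. exact: tofrac_mpolyX_neq0. Qed.

Lemma chart_decomp_E2 : has_chart_decomp ix (Ip_chart E2).
Proof.
have h_neq0 := oneDXM_neq0 ix (0 : {mpoly F[n]}).
apply: (localized_chart_decomp (H := 0)); rewrite (Ip_Cmx _ _ _ _ _ _ w_neq0).
under eq_bigr do rewrite Cmx_E2 //.
apply: (localized_trace_prod h_neq0) => i.
by apply: (mx_localizedM h_neq0); apply: mx_localized_mx2; localized_closure h_neq0.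
Qed.

Lemma chart_decomp_E4 : has_chart_decomp ix (Ip_chart E4).
Proof.
have h_neq0 := oneDXM_neq0 ix (0 : {mpoly F[n]}).
apply: (localized_chart_decomp (H := 0)); rewrite (Ip_Cmx _ _ _ _ _ _ w_neq0).
under eq_bigr do rewrite Cmx_E4 //.
apply: (localized_trace_prod h_neq0) => i.
by apply: (mx_localizedM h_neq0); apply: mx_localized_mx2; localized_closure h_neq0.
Qed.

Lemma chart_decomp_E8 : p \in [pchar F] -> has_chart_decomp ix (Ip_chart E8).
Proof.
move=> pcharF; pose k := 'X_ix * (T ^+ 2 + 1 - A1 - A2 + Y * 'X_ix) - T.
have h_neq0 := oneDXM_neq0 ix k.
have q_tofrac : 1 + x * (x * (T%:F ^+ 2 + 1 - A1%:F - A2%:F + Y%:F * x) - T%:F)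
                = (1 + 'X_ix * k)%:F.
  by rewrite /k !(rmorphD, rmorphN, rmorphM, rmorphXn, rmorph1).
have q_neq0 : 1 + x * (x * (T%:F ^+ 2 + 1 - A1%:F - A2%:F + Y%:F * x) - T%:F) != 0.
  by rewrite q_tofrac tofrac_eq0.
apply: (localized_chart_decomp (H := k)).
rewrite (Ip_Bmx _ _ _ _ _ (pchar_mpoly_frac n pcharF) w_neq0).
under eq_bigr do rewrite (Bmx_E8 _ x_neq0 q_neq0) q_tofrac.
apply: (localized_trace_prod h_neq0) => i.
by apply: mx_localized_mx2; localized_closure h_neq0.
Qed.

Lemma Ip_chart_decomp j : p \in [pchar F] -> has_chart_decomp ix (Ip_chart j).
Proof.
move=> pcharF.
by case: j; [apply: chart_decomp_E2 | apply: chart_decomp_E4 | apply: chart_decomp_E8].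
Qed.

End ChartRegularity.

Theorem theorem4p2 (p : nat) (hp : prime p) :
  (forall (j : exc_line) (w : ratfun 'F_p 5), w != 0 ->
    let V (i : 'I_5) : ratfun 'F_p 5 := ('X_i)%:F in
    let fg := chart_subst j (V 0) (V 1) (V 2) (V 3) (V 4) in
    has_chart_decomp (0 : 'I_5)
      (Ip p w fg.1 fg.2 (V 2) (V 3) (V 4)))
  /\
  (forall (k : fieldType), p \in [pchar k] ->
   forall (t a1 a2 : k) (j : exc_line) (w : ratfun k 2), w != 0 ->
    let V (i : 'I_2) : ratfun k 2 := ('X_i)%:F in
    let C (c : k) : ratfun k 2 := (c%:MP)%:F in
    let fg := chart_subst j (V 0) (V 1) (C a1) (C a2) (C t) in
    has_chart_decomp (0 : 'I_2)
      (Ip p w fg.1 fg.2 (C a1) (C a2) (C t))).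
Proof.
split=> [j w w_neq0 | k pchark t a1 a2 j w w_neq0].
  exact: (@Ip_chart_decomp 'F_p 5 0 'X_1 'X_2 'X_3 'X_4 p w w_neq0 j (pchar_Fp hp)).
exact: (@Ip_chart_decomp k 2 0 'X_1 a1%:MP a2%:MP t%:MP p w w_neq0 j pchark).
Qed.
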